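(* Define $\mu:[0,\infty)\to\mathbb R$ by $\mu(0)=0$ and, for $s>0$, $\mu(s)=\dfrac{\cosh s-\cos s-\sin s\,\sinh s}{\sin^2\frac{s}{2}\,(\sinh s-s)-\sinh^2\frac{s}{2}\,(\sin s-s)}$. Then $\mu$ is nonnegative, has countably many points $0=s_0<s_1<s_2<\dots$ where it vanishes, and on each interval $(s_k,s_{k+1})$, $k=0,1,2,\dots$, $\mu$ has a unique critical point $m_k$; on each such interval $\mu$ strictly increases from $0$ to $\mu(m_k)$ and then strictly decreases from $\mu(m_k)$ to $0$. *)

From Stdlib Require Import Reals.
Open Scope R_scope.

Definition mu_num (s : R) : R := cosh s - cos s - sin s * sinh s.
Definition mu_den (s : R) : R :=
  (sin (s / 2)) ^ 2 * (sinh s - s) - (sinh (s / 2)) ^ 2 * (sin s - s).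

(* mu(0) = 0, mu(s) = num/den for s > 0; the values for s < 0 are
   irrelevant (mu is only considered on [0, oo)) and set to 0. *)
Definition mu (s : R) : R :=
  if Rle_dec s 0 then 0 else mu_num s / mu_den s.

From Stdlib Require Import Reals Lra Lia Psatz.
From Coquelicot Require Import Coquelicot.
Open Scope R_scope.

(* With s = 2 t one has mu (2 t) = W(t)^2 / E(t), where W = sinh cos - cosh sin
   is the Wronskian of sinh and sin and E(t) = t (sinh^2 t - sin^2 t)
   - sin t sinh t W(t) > 0.  So mu >= 0 and its zeros are the 2 t_k with
   W(t_k) = 0; since W' = -2 sinh sin, (-1)^k W is strictly decreasing on
   [k PI, (k+1) PI], and W has exactly one zero t_k in (k PI, k PI + PI/2) for
   k >= 1.  The derivative of W^2/E is t W Q / (2 E^2) with Q = W^3 (ln |W|)''',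
   so on (t_k, t_(k+1)) the sign of mu' is the sign of L = (ln |W|)'''.  Now
   L' = -16 B / W^4 for an explicit B > 0 (Taylor bounds for t <= 1.85, the
   growth of sinh beyond), so L is strictly decreasing; it changes sign between
   k PI + PI/2 and (k+1) PI, hence has exactly one zero m_k there, and mu
   increases on [2 t_k, 2 m_k] and decreases on [2 m_k, 2 t_(k+1)]. *)

Lemma cosh_sqr x : cosh x ^ 2 = 1 + sinh x ^ 2.
Proof.
  unfold cosh, sinh.
  assert (E : exp x * exp (- x) = 1) by (rewrite <- exp_plus, Rplus_opp_r; apply exp_0).
  nra.
Qed.

Lemma cos_sqr x : cos x ^ 2 = 1 - sin x ^ 2.
Proof. pose proof (sin2_cos2 x). unfold Rsqr in *. nra. Qed.

Lemma sinh_double x : sinh (2 * x) = 2 * sinh x * cosh x.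
Proof.
  unfold sinh, cosh. replace (2 * x) with (x + x) by ring.
  replace (- (x + x)) with (- x + - x) by ring. rewrite !exp_plus. field.
Qed.

Lemma cosh_double x : cosh (2 * x) = cosh x ^ 2 + sinh x ^ 2.
Proof.
  unfold sinh, cosh. replace (2 * x) with (x + x) by ring.
  replace (- (x + x)) with (- x + - x) by ring. rewrite !exp_plus.
  assert (E : exp x * exp (- x) = 1) by (rewrite <- exp_plus, Rplus_opp_r; apply exp_0).
  nra.
Qed.

Lemma sinh_pos x : 0 < x -> 0 < sinh x.
Proof. intros Hx. rewrite <- sinh_0. now apply sinh_lt. Qed.

Lemma cosh_ge_1 x : 1 <= cosh x.
Proof.
  assert (0 < cosh x) by (unfold cosh; pose proof (exp_pos x); pose proof (exp_pos (- x)); lra).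
  pose proof (cosh_sqr x). nra.
Qed.

Lemma eq_of_ideal_combination (L R p q A B : R) :
  A = 0 -> B = 0 -> L - R = p * A + q * B -> L = R.
Proof. intros -> -> E. lra. Qed.

Lemma le_of_is_derive_le (f g df dg : R -> R) a b :
  a <= b -> f a <= g a ->
  (forall x, a <= x <= b -> is_derive f x (df x)) ->
  (forall x, a <= x <= b -> is_derive g x (dg x)) ->
  (forall x, a <= x <= b -> df x <= dg x) -> f b <= g b.
Proof.
  intros [Hab | <-] Ha Hf Hg Hd; [| exact Ha].
  destruct (MVT_cor2 (fun x => g x - f x) (fun x => dg x - df x) a b Hab)
    as [c [Hc Hac]].
  - intros c Hc. apply is_derive_Reals, (is_derive_minus g f); auto.
  - assert (df c <= dg c) by (apply Hd; lra). nra.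
Qed.

Lemma lt_of_is_derive_pos (f df : R -> R) a b :
  a < b -> (forall x, a <= x <= b -> is_derive f x (df x)) ->
  (forall x, a < x < b -> 0 < df x) -> f a < f b.
Proof.
  intros Hab Hf Hd.
  destruct (MVT_cor2 f df a b Hab) as [c [Hc Hac]].
  - intros c Hc. now apply is_derive_Reals, Hf.
  - assert (0 < df c) by (apply Hd; lra). nra.
Qed.

Ltac solve_is_derive := unfold sinh, cosh; auto_derive; auto; field.

Ltac compare_from_0 f g df dg :=
  apply (le_of_is_derive_le f g df dg 0); cbv beta;
  [ lra | rewrite ?sinh_0, ?cosh_0, ?sin_0, ?cos_0; lra
  | intros ? _; solve_is_derive | intros ? _; solve_is_derive | ].

Lemma sinh_ge_id x : 0 <= x -> x <= sinh x.
Proof.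
  intros Hx. compare_from_0 (fun t : R => t) sinh (fun _ : R => 1) cosh.
  intros t _. apply cosh_ge_1.
Qed.

Lemma cosh_ge_taylor2 x : 0 <= x -> 1 + x ^ 2 / 2 <= cosh x.
Proof.
  intros Hx. compare_from_0 (fun t => 1 + t ^ 2 / 2) cosh (fun t : R => t) sinh.
  intros t Ht. apply sinh_ge_id; lra.
Qed.

Lemma sinh_ge_taylor3 x : 0 <= x -> x + x ^ 3 / 6 <= sinh x.
Proof.
  intros Hx. compare_from_0 (fun t => t + t ^ 3 / 6) sinh (fun t => 1 + t ^ 2 / 2) cosh.
  intros t Ht. apply cosh_ge_taylor2; lra.
Qed.

Lemma cosh_ge_taylor4 x : 0 <= x -> 1 + x ^ 2 / 2 + x ^ 4 / 24 <= cosh x.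
Proof.
  intros Hx.
  compare_from_0 (fun t => 1 + t ^ 2 / 2 + t ^ 4 / 24) cosh (fun t => t + t ^ 3 / 6) sinh.
  intros t Ht. apply sinh_ge_taylor3; lra.
Qed.

Lemma sinh_ge_taylor5 x : 0 <= x -> x + x ^ 3 / 6 + x ^ 5 / 120 <= sinh x.
Proof.
  intros Hx.
  compare_from_0 (fun t => t + t ^ 3 / 6 + t ^ 5 / 120) sinh
    (fun t => 1 + t ^ 2 / 2 + t ^ 4 / 24) cosh.
  intros t Ht. apply cosh_ge_taylor4; lra.
Qed.

Lemma cosh_ge_taylor6 x : 0 <= x -> 1 + x ^ 2 / 2 + x ^ 4 / 24 + x ^ 6 / 720 <= cosh x.
Proof.
  intros Hx.
  compare_from_0 (fun t => 1 + t ^ 2 / 2 + t ^ 4 / 24 + t ^ 6 / 720) cosh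
    (fun t => t + t ^ 3 / 6 + t ^ 5 / 120) sinh.
  intros t Ht. apply sinh_ge_taylor5; lra.
Qed.

Lemma sinh_ge_taylor7 x :
  0 <= x -> x + x ^ 3 / 6 + x ^ 5 / 120 + x ^ 7 / 5040 <= sinh x.
Proof.
  intros Hx.
  compare_from_0 (fun t => t + t ^ 3 / 6 + t ^ 5 / 120 + t ^ 7 / 5040) sinh
    (fun t => 1 + t ^ 2 / 2 + t ^ 4 / 24 + t ^ 6 / 720) cosh.
  intros t Ht. apply cosh_ge_taylor6; lra.
Qed.

Lemma cos_ge_taylor2 x : 0 <= x -> 1 - x ^ 2 / 2 <= cos x.
Proof.
  intros Hx. compare_from_0 (fun t => 1 - t ^ 2 / 2) cos (fun t => - t) (fun t => - sin t).
  intros t Ht. destruct (Req_dec t 0) as [->|]; [rewrite sin_0; lra|].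
  pose proof (sin_lt_x t ltac:(lra)). lra.
Qed.

Lemma sinh_add_sin_ge x : 0 <= x -> 2 * x <= sinh x + sin x.
Proof.
  intros Hx. compare_from_0 (fun t => 2 * t) (fun t => sinh t + sin t)
    (fun _ : R => 2) (fun t => cosh t + cos t).
  intros t Ht. pose proof (cosh_ge_taylor2 t ltac:(lra)).
  pose proof (cos_ge_taylor2 t ltac:(lra)). lra.
Qed.

Lemma cosh_sub_cos_ge x : 0 <= x -> x ^ 2 <= cosh x - cos x.
Proof.
  intros Hx. compare_from_0 (fun t => t ^ 2) (fun t => cosh t - cos t)
    (fun t => 2 * t) (fun t => sinh t + sin t).
  intros t Ht. apply sinh_add_sin_ge; lra.
Qed.

Lemma sinh_sub_sin_ge x : 0 <= x -> x ^ 3 / 3 <= sinh x - sin x.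
Proof.
  intros Hx. compare_from_0 (fun t => t ^ 3 / 3) (fun t => sinh t - sin t)
    (fun t => t ^ 2) (fun t => cosh t - cos t).
  intros t Ht. apply cosh_sub_cos_ge; lra.
Qed.

(** * The Wronskian of sinh and sin *)

Definition wr t := sinh t * cos t - cosh t * sin t.

Lemma is_derive_wr t : is_derive wr t (-2 * sinh t * sin t).
Proof. unfold wr. solve_is_derive. Qed.

Lemma sinh_mul_sin_nonneg x : 0 <= x <= PI -> 0 <= sinh x * sin x.
Proof.
  intros Hx. apply Rmult_le_pos; [| apply sin_ge_0; lra].
  destruct (Req_dec x 0) as [->|]; [rewrite sinh_0; lra | left; apply sinh_pos; lra].
Qed.

Lemma wr_nonpos x : 0 <= x <= PI -> wr x <= 0.
Proof.
  intros Hx. unfold wr.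
  compare_from_0 (fun t => sinh t * cos t - cosh t * sin t) (fun _ : R => 0)
    (fun t => -2 * sinh t * sin t) (fun _ : R => 0).
  intros t Ht. pose proof (sinh_mul_sin_nonneg t ltac:(lra)). lra.
Qed.

Lemma cosh_mul_cos_le_1 x : 0 <= x <= PI -> cosh x * cos x <= 1.
Proof.
  intros Hx.
  compare_from_0 (fun t => cosh t * cos t) (fun _ : R => 1)
    (fun t => sinh t * cos t - cosh t * sin t) (fun _ : R => 0).
  intros t Ht. apply (wr_nonpos t); lra.
Qed.

Lemma sinh_mul_sin_le_sqr x : 0 <= x <= PI -> sinh x * sin x <= x ^ 2.
Proof.
  intros Hx.
  compare_from_0 (fun t => sinh t * sin t) (fun t => t ^ 2)
    (fun t => cosh t * sin t + sinh t * cos t) (fun t => 2 * t).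
  intros t Ht.
  compare_from_0 (fun t => cosh t * sin t + sinh t * cos t) (fun t => 2 * t)
    (fun t => 2 * cosh t * cos t) (fun _ : R => 2).
  intros u Hu. pose proof (cosh_mul_cos_le_1 u ltac:(lra)). lra.
Qed.

Lemma cosh_mul_cos_ge x : 0 <= x <= PI -> 1 - x ^ 4 / 6 <= cosh x * cos x.
Proof.
  intros Hx.
  compare_from_0 (fun t => 1 - t ^ 4 / 6) (fun t => cosh t * cos t)
    (fun t => - (2 * t ^ 3 / 3)) (fun t => sinh t * cos t - cosh t * sin t).
  intros t Ht.
  compare_from_0 (fun t => - (2 * t ^ 3 / 3)) (fun t => sinh t * cos t - cosh t * sin t)
    (fun t => - (2 * t ^ 2)) (fun t => -2 * sinh t * sin t).
  intros u Hu. pose proof (sinh_mul_sin_le_sqr u ltac:(lra)). lra.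
Qed.

Definition crit_slope t :=
  sinh t ^ 4 + sin t ^ 4 - 4 * sinh t ^ 2 * sin t ^ 2
  + sinh t * cosh t * sin t * cos t * (sinh t ^ 2 + sin t ^ 2).

Lemma PI_gt_3 : 3 < PI.
Proof. pose proof PI2_3_2. lra. Qed.

(* With X = sinh t sin t and K = cosh t cos t, both close to their Taylor
   polynomials for small t, the slope is (sinh t - sin t)^2 (...) - 2 (1 - K) X^2,
   and the positive square dominates while t^4 < 12. *)
Lemma crit_slope_pos_small t : 0 < t <= 37 / 20 -> 0 < crit_slope t.
Proof.
  intros Ht. pose proof PI_gt_3.
  assert (Hs : 0 < sin t) by (apply sin_gt_0; lra).
  assert (HS : 0 < sinh t) by (apply sinh_pos; lra).
  pose proof (sinh_sub_sin_ge t ltac:(lra)) as Hd.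
  pose proof (sinh_mul_sin_le_sqr t ltac:(lra)) as HX.
  pose proof (cosh_mul_cos_ge t ltac:(lra)) as HK.
  assert (E : crit_slope t = (sinh t - sin t) ^ 2 * (sinh t ^ 2 + sin t ^ 2
             + (2 + cosh t * cos t) * (sinh t * sin t))
             - 2 * (1 - cosh t * cos t) * (sinh t * sin t) ^ 2)
    by (unfold crit_slope; ring).
  rewrite E.
  set (K := cosh t * cos t) in *. set (X := sinh t * sin t) in *.
  set (d := sinh t - sin t) in *.
  assert (HX0 : 0 < X) by (unfold X; nra).
  assert (Hsq : 2 * X <= sinh t ^ 2 + sin t ^ 2)
    by (pose proof (pow2_ge_0 d); unfold X, d in *; nra).
  assert (Ht4 : t ^ 4 <= 1172 / 100).
  { assert (t ^ 2 <= 37 / 20 * (37 / 20)) by nra. nra. }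
  assert (Ht6 : 0 < t ^ 6) by (apply pow_lt; lra).
  assert (Hd2 : (t ^ 3 / 3) ^ 2 <= d ^ 2).
  { apply pow_incr. split; [|lra]. assert (0 < t ^ 3) by (apply pow_lt; lra). lra. }
  assert (Hsquare : (t ^ 3 / 3) ^ 2 * (5 - t ^ 4 / 6) <= d ^ 2 * (4 + K)).
  { apply Rmult_le_compat; try lra. }
  assert (Hdefect : (1 - K) * X <= t ^ 4 / 6 * t ^ 2).
  { assert (0 <= t ^ 4) by (apply pow_le; lra). nra. }
  assert (Hgap : 0 < (t ^ 3 / 3) ^ 2 * (5 - t ^ 4 / 6) - 2 * (t ^ 4 / 6 * t ^ 2)).
  { replace ((t ^ 3 / 3) ^ 2 * (5 - t ^ 4 / 6) - 2 * (t ^ 4 / 6 * t ^ 2))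
      with (t ^ 6 / 9 * (2 - t ^ 4 / 6)) by field.
    apply Rmult_lt_0_compat; lra. }
  assert (0 <= d ^ 2) by apply pow2_ge_0.
  assert (0 < X * (d ^ 2 * (4 + K) - 2 * (1 - K) * X)) by (apply Rmult_lt_0_compat; lra).
  nra.
Qed.

(* Here |sin t cos t| <= 1/2 and sinh t cosh t <= sinh^2 t + 1/2 reduce the
   claim to a quadratic inequality in sinh^2 t and sin^2 t. *)
Lemma crit_slope_pos_large t : 37 / 20 <= t -> 0 < crit_slope t.
Proof.
  intros Ht.
  assert (HS : 306 / 100 <= sinh t).
  { pose proof (sinh_ge_taylor7 (37 / 20) ltac:(lra)).
    destruct Ht as [Ht | <-]; [pose proof (sinh_lt _ _ Ht) |]; lra. }
  pose proof (cosh_sqr t) as HC. pose proof (cos_sqr t) as Hc.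
  pose proof (cosh_ge_1 t).
  unfold crit_slope.
  set (S := sinh t) in *. set (C := cosh t) in *.
  set (s := sin t) in *. set (c := cos t) in *.
  assert (Hsc : 2 * Rabs (s * c) <= 1).
  { pose proof (pow2_ge_0 (s - c)). pose proof (pow2_ge_0 (s + c)).
    destruct (Rle_dec 0 (s * c)); [rewrite Rabs_right | rewrite Rabs_left]; nra. }
  assert (HSC : S * C <= S ^ 2 + 1 / 2).
  { assert (C * C <= (S + / (2 * S)) * (S + / (2 * S))).
    { replace ((S + / (2 * S)) * (S + / (2 * S))) with (S ^ 2 + 1 + / (4 * S ^ 2))
        by (field; lra).
      assert (0 < / (4 * S ^ 2)) by (apply Rinv_0_lt_compat; nra). nra. }
    assert (C <= S + / (2 * S)).
    { assert (0 < / (2 * S)) by (apply Rinv_0_lt_compat; lra). nra. }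
    replace (S ^ 2 + 1 / 2) with (S * (S + / (2 * S))) by (field; lra).
    apply Rmult_le_compat_l; lra. }
  set (D := S ^ 2 + s ^ 2).
  assert (HT : - ((S ^ 2 + 1 / 2) / 2 * D) <= S * C * s * c * D).
  { assert (0 <= D) by (unfold D; nra).
    assert (- ((S ^ 2 + 1 / 2) / 2) <= s * c * (S * C)).
    { assert (0 <= S * C) by (apply Rmult_le_pos; lra).
      assert (Rabs (s * c) * (S * C) <= 1 / 2 * (S ^ 2 + 1 / 2))
        by (apply Rmult_le_compat; try lra; apply Rabs_pos).
      pose proof (Rabs_maj2 (s * c)). nra. }
    replace (S * C * s * c * D) with (s * c * (S * C) * D) by ring. nra. }
  replace (S ^ 4 + s ^ 4 - 4 * S ^ 2 * s ^ 2) with (D ^ 2 - 6 * S ^ 2 * s ^ 2)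
    by (unfold D; ring).
  assert (0 < D ^ 2 - 6 * S ^ 2 * s ^ 2 - (S ^ 2 + 1 / 2) / 2 * D).
  { unfold D. set (q := s ^ 2) in *. set (p := S ^ 2) in *.
    assert (Hq : 0 <= q <= 1).
    { pose proof (pow2_ge_0 c). split; [apply pow2_ge_0 | lra]. }
    assert (Hp : 93636 / 10000 <= p).
    { assert (306 / 100 * (306 / 100) <= S * S) by (apply Rmult_le_compat; lra).
      unfold p. lra. }
    replace ((p + q) ^ 2 - 6 * p * q - (p + 1 / 2) / 2 * (p + q))
      with (p ^ 2 / 2 - p / 4 - q * (9 / 2 * p + 1 / 4) + q ^ 2) by field.
    assert (0 <= (1 - q) * (9 / 2 * p + 1 / 4 - 1 - q)) by (apply Rmult_le_pos; lra).
    nra. }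
  lra.
Qed.

Lemma crit_slope_pos t : 0 < t -> 0 < crit_slope t.
Proof.
  intros Ht. destruct (Rle_dec t (37 / 20)).
  - apply crit_slope_pos_small; lra.
  - apply crit_slope_pos_large; lra.
Qed.

(* With W = wr we have W' = -2 sinh sin, W'' = -2 (cosh sin + sinh cos),
   W''' = -4 cosh cos, and crit = W^2 W''' - 3 W W' W'' + 2 W'^3 = W^3 (ln |W|)'''. *)
Definition crit t :=
  wr t ^ 2 * (-4 * cosh t * cos t)
  - 3 * wr t * (-2 * sinh t * sin t) * (-2 * (cosh t * sin t + sinh t * cos t))
  + 2 * (-2 * sinh t * sin t) ^ 3.

Definition dcrit t :=
  16 * cosh t ^ 3 * sin t ^ 3 + 8 * sinh t * cosh t ^ 2 * sin t ^ 2 * cos t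
  - 8 * sinh t ^ 2 * cosh t * sin t * cos t ^ 2 - 24 * sinh t ^ 2 * cosh t * sin t ^ 3
  - 16 * sinh t ^ 3 * cos t ^ 3 - 24 * sinh t ^ 3 * sin t ^ 2 * cos t.

Lemma is_derive_crit t : is_derive crit t (dcrit t).
Proof. unfold crit, dcrit, wr. solve_is_derive. Qed.

Lemma dcrit_identity t :
  dcrit t * wr t - 3 * (-2 * sinh t * sin t) * crit t = -16 * crit_slope t.
Proof.
  pose proof (cosh_sqr t) as HC. pose proof (cos_sqr t) as Hc.
  unfold dcrit, crit, crit_slope, wr.
  set (S := sinh t) in *. set (C := cosh t) in *.
  set (s := sin t) in *. set (c := cos t) in *.
  apply (eq_of_ideal_combination _ _
    (- 16 * s ^ 4 - 16 * C ^ 2 * s ^ 4 - 16 * S * C * s ^ 3 * c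
     + 64 * S ^ 2 * s ^ 2 * c ^ 2 + 80 * S ^ 2 * s ^ 4)
    (64 * S ^ 2 * s ^ 2 - 16 * S ^ 3 * C * s * c - 16 * S ^ 4
     - 16 * S ^ 4 * c ^ 2 - 16 * S ^ 4 * s ^ 2)
    (C ^ 2 - (1 + S ^ 2)) (c ^ 2 - (1 - s ^ 2))); [lra | lra | ring].
Qed.

Definition crit_ratio t := crit t / wr t ^ 3.

Lemma is_derive_crit_ratio t :
  wr t <> 0 -> is_derive crit_ratio t (-16 * crit_slope t / wr t ^ 4).
Proof.
  intros HW.
  pose proof (is_derive_div crit (fun y => wr y ^ 3) t _ _ (is_derive_crit t)
    (is_derive_pow wr 3 t _ (is_derive_wr t)) (pow_nonzero _ 3 HW)) as D.
  rewrite <- dcrit_identity.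
  replace ((dcrit t * wr t - 3 * (-2 * sinh t * sin t) * crit t) / wr t ^ 4)
    with ((dcrit t * wr t ^ 3 - crit t * (INR 3 * (-2 * sinh t * sin t) * wr t ^ Nat.pred 3))
          / (wr t ^ 3) ^ 2) by (simpl; field; exact HW).
  exact D.
Qed.

Definition den_half t := t * (sinh t ^ 2 - sin t ^ 2) - sin t * sinh t * wr t.

Definition dden_half t :=
  - sin t ^ 2 + cosh t ^ 2 * sin t ^ 2 + sinh t ^ 2 - sinh t ^ 2 * cos t ^ 2
  + 2 * sinh t ^ 2 * sin t ^ 2 - 2 * t * sin t * cos t + 2 * t * sinh t * cosh t.

Lemma is_derive_den_half t : is_derive den_half t (dden_half t).
Proof. unfold den_half, dden_half, wr. solve_is_derive. Qed.

Lemma dden_half_identity t :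
  2 * (-2 * sinh t * sin t) * den_half t - wr t * dden_half t = t / 2 * crit t.
Proof.
  pose proof (cosh_sqr t) as HC. pose proof (cos_sqr t) as Hc.
  unfold den_half, dden_half, crit, wr.
  set (S := sinh t) in *. set (C := cosh t) in *.
  set (s := sin t) in *. set (c := cos t) in *.
  apply (eq_of_ideal_combination _ _
    (C * s ^ 3 - S * s ^ 2 * c + 2 * t * C * s ^ 2 * c + 2 * t * S * s
     - 4 * t * S * s * c ^ 2 - 6 * t * S * s ^ 3)
    (- S ^ 2 * C * s + S ^ 3 * c - 2 * t * S * s + 2 * t * S ^ 2 * C * c
     + 2 * t * S ^ 3 * s)
    (C ^ 2 - (1 + S ^ 2)) (c ^ 2 - (1 - s ^ 2))); [lra | lra | field].
Qed.

Definition mu_half t := wr t ^ 2 / den_half t.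

Lemma is_derive_mu_half t :
  den_half t <> 0 -> is_derive mu_half t (t * wr t * crit t / (2 * den_half t ^ 2)).
Proof.
  intros HE.
  pose proof (is_derive_div (fun y => wr y ^ 2) den_half t _ _
    (is_derive_pow wr 2 t _ (is_derive_wr t)) (is_derive_den_half t) HE) as D.
  replace (t * wr t * crit t / (2 * den_half t ^ 2))
    with ((INR 2 * (-2 * sinh t * sin t) * wr t ^ Nat.pred 2 * den_half t
           - wr t ^ 2 * dden_half t) / den_half t ^ 2).
  - exact D.
  - transitivity (wr t * (2 * (-2 * sinh t * sin t) * den_half t - wr t * dden_half t)
                  / den_half t ^ 2); [simpl; field; exact HE |].
    rewrite dden_half_identity. field. exact HE.
Qed.

Lemma mu_num_eq s : mu_num s = 2 * wr (s / 2) ^ 2.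
Proof.
  unfold mu_num, wr. replace s with (2 * (s / 2)) at 1 2 3 4 by field.
  rewrite cosh_double, sinh_double, sin_2a, cos_2a.
  pose proof (cosh_sqr (s / 2)) as HC. pose proof (cos_sqr (s / 2)) as Hc.
  set (S := sinh (s / 2)) in *. set (C := cosh (s / 2)) in *.
  set (x := sin (s / 2)) in *. set (c := cos (s / 2)) in *.
  apply (eq_of_ideal_combination _ _ (1 - 2 * x ^ 2) (-1 - 2 * S ^ 2)
    (C ^ 2 - (1 + S ^ 2)) (c ^ 2 - (1 - x ^ 2))); [lra | lra | ring].
Qed.

Lemma mu_den_eq s : mu_den s = 2 * den_half (s / 2).
Proof.
  unfold mu_den, den_half, wr.
  assert (Hsinh : sinh s = 2 * sinh (s / 2) * cosh (s / 2))
    by (rewrite <- sinh_double; f_equal; field).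
  assert (Hsin : sin s = 2 * sin (s / 2) * cos (s / 2))
    by (rewrite <- sin_2a; f_equal; field).
  rewrite Hsinh, Hsin. field.
Qed.

Lemma mu_den_pos s : 0 < s -> 0 < mu_den s.
Proof.
  intros Hs. unfold mu_den.
  pose proof (sinh_ge_id s ltac:(lra)). pose proof (sin_lt_x s Hs).
  assert (0 <= sin (s / 2) ^ 2 * (sinh s - s))
    by (apply Rmult_le_pos; [apply pow2_ge_0 | lra]).
  assert (0 < sinh (s / 2) ^ 2 * (s - sin s))
    by (apply Rmult_lt_0_compat; [apply pow_lt, sinh_pos | ]; lra).
  lra.
Qed.

Lemma den_half_pos t : 0 < t -> 0 < den_half t.
Proof.
  intros Ht. pose proof (mu_den_pos (2 * t) ltac:(lra)) as H.
  rewrite mu_den_eq in H. replace (2 * t / 2) with t in H by field. lra.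
Qed.

Lemma mu_eq_mu_half s : 0 < s -> mu s = mu_half (s / 2).
Proof.
  intros Hs. unfold mu, mu_half. destruct (Rle_dec s 0); [lra |].
  rewrite mu_num_eq, mu_den_eq. pose proof (den_half_pos (s / 2) ltac:(lra)).
  field. lra.
Qed.

Definition dmu s := s / 8 * wr (s / 2) * crit (s / 2) / den_half (s / 2) ^ 2.

Lemma derivable_pt_lim_mu s : 0 < s -> derivable_pt_lim mu s (dmu s).
Proof.
  intros Hs. apply is_derive_Reals.
  apply (is_derive_ext_loc (fun y => mu_half (y / 2))).
  - exists (mkposreal s Hs). intros y Hy.
    change (Rabs (y - s) < s) in Hy. apply Rabs_def2 in Hy.
    symmetry. apply mu_eq_mu_half. lra.
  - assert (Dhalf : is_derive (fun y : R => y / 2) s (/ 2)) by (auto_derive; auto; field).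
    pose proof (is_derive_comp mu_half (fun y => y / 2) s _ _
      (is_derive_mu_half (s / 2) (Rgt_not_eq _ _ (den_half_pos (s / 2) ltac:(lra))))
      Dhalf) as D.
    replace (dmu s) with (scal (/ 2) (s / 2 * wr (s / 2) * crit (s / 2)
                                      / (2 * den_half (s / 2) ^ 2))).
    + exact D.
    + unfold dmu, scal; simpl; unfold mult; simpl. field.
      pose proof (den_half_pos (s / 2) ltac:(lra)). lra.
Qed.

(** * Zeros of the Wronskian and the critical points between them *)

Lemma sin_add_INR_PI k y : sin (y + INR k * PI) = (-1) ^ k * sin y.
Proof.
  induction k as [|k IH]; [simpl; rewrite Rmult_0_l, Rplus_0_r; ring |].
  rewrite S_INR. replace (y + (INR k + 1) * PI) with (y + INR k * PI + PI) by ring.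
  rewrite neg_sin, IH. simpl. ring.
Qed.

Lemma cos_add_INR_PI k y : cos (y + INR k * PI) = (-1) ^ k * cos y.
Proof.
  induction k as [|k IH]; [simpl; rewrite Rmult_0_l, Rplus_0_r; ring |].
  rewrite S_INR. replace (y + (INR k + 1) * PI) with (y + INR k * PI + PI) by ring.
  rewrite neg_cos, IH. simpl. ring.
Qed.

Lemma neg1_pow_sqr k : (-1) ^ k * (-1) ^ k = 1.
Proof. rewrite <- Rpow_mult_distr. replace (-1 * -1) with 1 by ring. apply pow1. Qed.

Lemma INR_PI_nonneg k : 0 <= INR k * PI.
Proof. apply Rmult_le_pos; [apply pos_INR | pose proof PI_RGT_0; lra]. Qed.

Lemma wr_INR_PI k : wr (INR k * PI) = (-1) ^ k * sinh (INR k * PI).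
Proof.
  unfold wr. rewrite <- (Rplus_0_l (INR k * PI)), sin_add_INR_PI, cos_add_INR_PI.
  rewrite sin_0, cos_0, Rplus_0_l. ring.
Qed.

Lemma wr_INR_PI_PI2 k : wr (INR k * PI + PI / 2) = - (-1) ^ k * cosh (INR k * PI + PI / 2).
Proof.
  unfold wr. rewrite (Rplus_comm _ (PI / 2)), sin_add_INR_PI, cos_add_INR_PI.
  rewrite sin_PI2, cos_PI2. ring.
Qed.

Lemma continuity_of_is_derive (f df : R -> R) :
  (forall x, is_derive f x (df x)) -> continuity f.
Proof.
  intros Hf x. apply derivable_continuous_pt. exists (df x). apply is_derive_Reals, Hf.
Qed.

Lemma sign_wr_decreasing k u v :
  INR k * PI <= u -> u < v -> v <= INR k * PI + PI -> (-1) ^ k * wr v < (-1) ^ k * wr u.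
Proof.
  intros Hu Huv Hv. pose proof (INR_PI_nonneg k).
  enough (- ((-1) ^ k * wr u) < - ((-1) ^ k * wr v)) by lra.
  apply (lt_of_is_derive_pos (fun y => - ((-1) ^ k * wr y)) (fun y => 2 * sinh y * ((-1) ^ k * sin y)) u v Huv).
  - intros y _. unfold wr. solve_is_derive.
  - intros y Hy. apply Rmult_lt_0_compat; [apply Rmult_lt_0_compat; [lra | apply sinh_pos; lra] |].
    replace y with (y - INR k * PI + INR k * PI) by ring.
    rewrite sin_add_INR_PI, <- Rmult_assoc, neg1_pow_sqr, Rmult_1_l.
    apply sin_gt_0; lra.
Qed.

Definition wr_root_succ (k : nat) :
  {z | INR (S k) * PI < z < INR (S k) * PI + PI / 2 /\ wr z = 0}.
Proof.
  set (a := INR (S k) * PI). pose proof PI_RGT_0.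
  assert (Ha : 0 < a) by (apply Rmult_lt_0_compat; [apply lt_0_INR; lia | lra]).
  assert (Hwa : (-1) ^ S k * wr a = sinh a).
  { unfold a. rewrite wr_INR_PI, <- Rmult_assoc, neg1_pow_sqr. ring. }
  assert (Hwb : (-1) ^ S k * wr (a + PI / 2) = - cosh (a + PI / 2)).
  { unfold a. rewrite wr_INR_PI_PI2.
    transitivity (- ((-1) ^ S k * (-1) ^ S k) * cosh (INR (S k) * PI + PI / 2)); [ring |].
    rewrite neg1_pow_sqr. ring. }
  pose proof (sinh_pos a Ha). pose proof (cosh_ge_1 (a + PI / 2)).
  destruct (IVT (fun y => - ((-1) ^ S k * wr y)) a (a + PI / 2)) as [z [Hz Hwz]].
  - apply continuity_opp, continuity_scal, (continuity_of_is_derive _ _ is_derive_wr).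
  - lra.
  - cbv beta. lra.
  - cbv beta. lra.
  - exists z.
    assert (Hw : wr z = 0).
    { pose proof (pow_nonzero (-1) (S k) ltac:(lra)). cbv beta in Hwz. nra. }
    split; [| exact Hw].
    destruct Hz as [[Hz1 | Hz1] [Hz2 | Hz2]]; subst; split; try lra.
Qed.

Definition wr_root (k : nat) : R :=
  match k with O => 0 | S j => proj1_sig (wr_root_succ j) end.

Lemma wr_wr_root k : wr (wr_root k) = 0.
Proof.
  destruct k as [|k]; [unfold wr; simpl; rewrite sinh_0, sin_0; ring |].
  exact (proj2 (proj2_sig (wr_root_succ k))).
Qed.

Lemma wr_root_succ_bounds k :
  INR (S k) * PI < wr_root (S k) < INR (S k) * PI + PI / 2.
Proof. exact (proj1 (proj2_sig (wr_root_succ k))). Qed.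

Lemma wr_root_le k : wr_root k <= INR k * PI + PI / 2.
Proof.
  pose proof PI_RGT_0.
  destruct k as [|k]; [simpl; lra | pose proof (wr_root_succ_bounds k); lra].
Qed.

Lemma wr_root_lt_succ k : wr_root k < wr_root (S k).
Proof.
  pose proof (wr_root_le k). pose proof (wr_root_succ_bounds k). pose proof PI_RGT_0.
  rewrite S_INR in *. lra.
Qed.

Lemma wr_root_lt i j : (i < j)%nat -> wr_root i < wr_root j.
Proof.
  induction 1; [apply wr_root_lt_succ |].
  pose proof (wr_root_lt_succ m). lra.
Qed.

Lemma wr_root_nonneg k : 0 <= wr_root k.
Proof.
  destruct k as [|k]; [simpl; lra |].
  pose proof (wr_root_lt 0 (S k) ltac:(lia)). simpl in *. lra.
Qed.

Lemma floor_PI y : 0 <= y -> exists n : nat, INR n * PI <= y < INR n * PI + PI.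
Proof.
  intros Hy. destruct (INR_archimed PI y PI_RGT_0) as [N HN].
  induction N as [|N IH]; [simpl in HN; lra |].
  destruct (Rle_dec (INR N * PI) y).
  - exists N. rewrite S_INR in HN. lra.
  - apply IH. lra.
Qed.

Lemma wr_eq0_wr_root y : 0 <= y -> wr y = 0 -> exists k, y = wr_root k.
Proof.
  intros Hy Hw. destruct (floor_PI y Hy) as [[|n] Hn].
  - exists 0%nat. simpl in *. destruct (Req_dec y 0) as [|Hy0]; [lra | exfalso].
    pose proof (sign_wr_decreasing 0 0 y ltac:(simpl; lra) ltac:(lra) ltac:(simpl; lra)).
    simpl in *. rewrite Hw in *. unfold wr in *. rewrite sinh_0, sin_0 in *. lra.
  - exists (S n). pose proof (wr_root_succ_bounds n). pose proof PI_RGT_0.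
    pose proof (wr_wr_root (S n)) as Hr.
    destruct (Rtotal_order y (wr_root (S n))) as [Hlt | [Heq | Hgt]]; [exfalso | exact Heq | exfalso].
    + pose proof (sign_wr_decreasing (S n) y (wr_root (S n)) ltac:(lra) Hlt ltac:(lra)).
      rewrite Hw, Hr in *. lra.
    + pose proof (sign_wr_decreasing (S n) (wr_root (S n)) y ltac:(lra) Hgt ltac:(lra)).
      rewrite Hw, Hr in *. lra.
Qed.

Lemma wr_neq0_between k y : wr_root k < y < wr_root (S k) -> wr y <> 0.
Proof.
  intros Hy Hw. pose proof (wr_root_nonneg k).
  destruct (wr_eq0_wr_root y ltac:(lra) Hw) as [j ->].
  destruct (Nat.lt_total j k) as [Hjk | [-> | Hkj]]; [| lra |].
  - pose proof (wr_root_lt _ _ Hjk). lra.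
  - destruct (Nat.eq_dec j (S k)) as [-> | Hne]; [lra |].
    pose proof (wr_root_lt (S k) j ltac:(lia)). lra.
Qed.

Lemma wr_mul_crit_INR_PI_PI2 k :
  0 < wr (INR k * PI + PI / 2) * crit (INR k * PI + PI / 2).
Proof.
  set (y := INR k * PI + PI / 2).
  assert (Hs : sin y = (-1) ^ k)
    by (unfold y; rewrite Rplus_comm, sin_add_INR_PI, sin_PI2; ring).
  assert (Hc : cos y = 0)
    by (unfold y; rewrite Rplus_comm, cos_add_INR_PI, cos_PI2; ring).
  assert (HS : 2 < sinh y).
  { pose proof (sinh_ge_taylor3 (3 / 2) ltac:(lra)).
    assert (sinh (3 / 2) < sinh y)
      by (apply sinh_lt; unfold y; pose proof (INR_PI_nonneg k); pose proof PI2_3_2; lra).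
    lra. }
  pose proof (cosh_sqr y) as HC. pose proof (cosh_ge_1 y). pose proof (neg1_pow_sqr k) as He.
  unfold crit, wr. rewrite Hs, Hc.
  set (S := sinh y) in *. set (C := cosh y) in *. set (e := (-1) ^ k) in *.
  replace ((S * 0 - C * e) * ((S * 0 - C * e) ^ 2 * (-4 * C * 0)
    - 3 * (S * 0 - C * e) * (-2 * S * e) * (-2 * (C * e + S * 0)) + 2 * (-2 * S * e) ^ 3))
    with (4 * C * S * (e * e) ^ 2 * (4 * S ^ 2 - 3 * C ^ 2)) by ring.
  rewrite He, HC. assert (3 < S ^ 2) by nra. assert (0 < C * S) by nra. nra.
Qed.

Lemma wr_mul_crit_INR_PI k : (0 < k)%nat -> wr (INR k * PI) * crit (INR k * PI) < 0.
Proof.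
  intros Hk. set (y := INR k * PI).
  assert (Hs : sin y = 0)
    by (unfold y; rewrite <- (Rplus_0_l (INR k * PI)), sin_add_INR_PI, sin_0; ring).
  assert (Hc : cos y = (-1) ^ k)
    by (unfold y; rewrite <- (Rplus_0_l (INR k * PI)), cos_add_INR_PI, cos_0; ring).
  assert (HS : 0 < sinh y).
  { apply sinh_pos. unfold y. apply Rmult_lt_0_compat; [apply lt_0_INR; lia | apply PI_RGT_0]. }
  pose proof (cosh_ge_1 y). pose proof (neg1_pow_sqr k) as He.
  unfold crit, wr. rewrite Hs, Hc.
  set (S := sinh y) in *. set (C := cosh y) in *. set (e := (-1) ^ k) in *.
  replace ((S * e - C * 0) * ((S * e - C * 0) ^ 2 * (-4 * C * e)
    - 3 * (S * e - C * 0) * (-2 * S * 0) * (-2 * (C * 0 + S * e)) + 2 * (-2 * S * 0) ^ 3))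
    with (- (4 * C * S ^ 3 * (e * e) ^ 2)) by ring.
  rewrite He. assert (0 < S ^ 3) by (apply pow_lt; lra). nra.
Qed.

Lemma pow4_pos x : x <> 0 -> 0 < x ^ 4.
Proof.
  intros Hx. replace (x ^ 4) with ((x * x) ^ 2) by ring.
  apply pow_lt. now apply Rsqr_pos_lt.
Qed.

Section Arch.

Variable k : nat.

Lemma crit_ratio_decreasing u v :
  wr_root k < u -> u < v -> v < wr_root (S k) -> crit_ratio v < crit_ratio u.
Proof.
  intros Hu Huv Hv. pose proof (wr_root_nonneg k).
  enough (- crit_ratio u < - crit_ratio v) by lra.
  apply (lt_of_is_derive_pos (fun y => - crit_ratio y)
           (fun y => 16 * crit_slope y / wr y ^ 4) u v Huv).
  - intros y Hy. assert (HW : wr y <> 0) by (apply (wr_neq0_between k); lra).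
    replace (16 * crit_slope y / wr y ^ 4) with (opp (-16 * crit_slope y / wr y ^ 4))
      by (unfold opp; simpl; field; exact HW).
    apply (is_derive_opp crit_ratio), is_derive_crit_ratio, HW.
  - intros y Hy. assert (HW : wr y <> 0) by (apply (wr_neq0_between k); lra).
    apply Rdiv_lt_0_compat; [| now apply pow4_pos].
    pose proof (crit_slope_pos y ltac:(lra)). lra.
Qed.

Lemma crit_root_between : exists m, wr_root k < m < wr_root (S k) /\ crit m = 0.
Proof.
  pose proof (wr_root_le k). pose proof (wr_root_succ_bounds k). pose proof PI_RGT_0.
  pose proof (wr_mul_crit_INR_PI_PI2 k). pose proof (wr_mul_crit_INR_PI (S k) ltac:(lia)).
  destruct (IVT (fun y => - (wr y * crit y)) (INR k * PI + PI / 2) (INR (S k) * PI))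
    as [m [Hm Hwcm]]; cbv beta in *.
  - apply continuity_opp, continuity_mult;
      [apply (continuity_of_is_derive _ _ is_derive_wr)
      | apply (continuity_of_is_derive _ _ is_derive_crit)].
  - rewrite S_INR. lra.
  - lra.
  - lra.
  - exists m.
    assert (m <> INR k * PI + PI / 2) by (intros ->; lra).
    assert (Hm' : wr_root k < m < wr_root (S k)) by lra.
    split; [exact Hm' |].
    pose proof (wr_neq0_between k m Hm').
    destruct (Rmult_integral (wr m) (crit m)); [lra | contradiction | assumption].
Qed.

Lemma crit_ratio_sign :
  exists m, wr_root k < m < wr_root (S k) /\ crit_ratio m = 0 /\
    (forall t, wr_root k < t < m -> 0 < crit_ratio t) /\
    (forall t, m < t < wr_root (S k) -> crit_ratio t < 0).
Proof.
  destruct crit_root_between as [m [Hm Hcm]].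
  assert (Hrm : crit_ratio m = 0) by (unfold crit_ratio; rewrite Hcm; lra).
  exists m. split; [exact Hm |]. split; [exact Hrm |]. split.
  - intros t Ht. rewrite <- Hrm. apply crit_ratio_decreasing; lra.
  - intros t Ht. rewrite <- Hrm. apply crit_ratio_decreasing; lra.
Qed.

Lemma dmu_eq_pos_mul x :
  2 * wr_root k < x < 2 * wr_root (S k) -> exists P, 0 < P /\ dmu x = P * crit_ratio (x / 2).
Proof.
  intros Hx. pose proof (wr_root_nonneg k).
  assert (HW : wr (x / 2) <> 0) by (apply (wr_neq0_between k); lra).
  pose proof (den_half_pos (x / 2) ltac:(lra)).
  exists (x * wr (x / 2) ^ 4 / (8 * den_half (x / 2) ^ 2)). split.
  - apply Rdiv_lt_0_compat.
    + apply Rmult_lt_0_compat; [lra | now apply pow4_pos].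
    + apply Rmult_lt_0_compat; [lra | apply pow_lt; lra].
  - unfold dmu, crit_ratio. field. split; [exact HW | lra].
Qed.

Lemma dmu_sign :
  exists m, 2 * wr_root k < m < 2 * wr_root (S k) /\ dmu m = 0 /\
    (forall x, 2 * wr_root k < x < m -> 0 < dmu x) /\
    (forall x, m < x < 2 * wr_root (S k) -> dmu x < 0).
Proof.
  destruct crit_ratio_sign as [c (Hc & Hc0 & Hpos & Hneg)].
  exists (2 * c). split; [lra |]. split; [| split].
  - destruct (dmu_eq_pos_mul (2 * c) ltac:(lra)) as [P [HP ->]].
    replace (2 * c / 2) with c by field. rewrite Hc0. ring.
  - intros x Hx. destruct (dmu_eq_pos_mul x ltac:(lra)) as [P [HP ->]].
    apply Rmult_lt_0_compat; [exact HP | apply Hpos; lra].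
  - intros x Hx. destruct (dmu_eq_pos_mul x ltac:(lra)) as [P [HP ->]].
    pose proof (Hneg (x / 2) ltac:(lra)). nra.
Qed.

End Arch.

Lemma mu_nonneg x : 0 <= x -> 0 <= mu x.
Proof.
  intros [Hx | <-]; [| unfold mu; destruct (Rle_dec 0 0); lra].
  rewrite mu_eq_mu_half by exact Hx. unfold mu_half.
  apply Rle_mult_inv_pos; [apply pow2_ge_0 | apply den_half_pos; lra].
Qed.

Lemma mu_wr_root k : mu (2 * wr_root k) = 0.
Proof.
  destruct (Req_dec (wr_root k) 0) as [-> | Hk].
  - unfold mu. destruct (Rle_dec (2 * 0) 0); lra.
  - pose proof (wr_root_nonneg k). rewrite mu_eq_mu_half by lra. unfold mu_half.
    replace (2 * wr_root k / 2) with (wr_root k) by field.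
    rewrite wr_wr_root. unfold Rdiv. ring.
Qed.

Lemma mu_eq0 x : 0 <= x -> mu x = 0 -> exists k, x = 2 * wr_root k.
Proof.
  intros [Hx | <-] Hmu; [| exists 0%nat; simpl; ring].
  rewrite mu_eq_mu_half in Hmu by exact Hx. unfold mu_half in Hmu.
  pose proof (den_half_pos (x / 2) ltac:(lra)).
  assert (HW : wr (x / 2) = 0).
  { assert (wr (x / 2) ^ 2 = 0)
      by (rewrite <- (Rmult_0_l (den_half (x / 2))), <- Hmu; field; lra).
    nra. }
  destruct (wr_eq0_wr_root (x / 2) ltac:(lra) HW) as [k Hk]. exists k. lra.
Qed.

Lemma mu_pos_between k x : 2 * wr_root k < x < 2 * wr_root (S k) -> 0 < mu x.
Proof.
  intros Hx. pose proof (wr_root_nonneg k).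
  destruct (Rle_lt_or_eq_dec 0 (mu x) (mu_nonneg x ltac:(lra))) as [| Hmu]; [assumption |].
  destruct (mu_eq0 x ltac:(lra) (eq_sym Hmu)) as [j ->].
  exfalso. apply (wr_neq0_between k (wr_root j)); [lra | apply wr_wr_root].
Qed.

Section Monotonicity.

Variables (k : nat) (m : R).
Hypothesis Hm : 2 * wr_root k < m < 2 * wr_root (S k).

Lemma mu_increasing_to :
  (forall x, 2 * wr_root k < x < m -> 0 < dmu x) ->
  forall x y, 2 * wr_root k <= x -> x < y -> y <= m -> mu x < mu y.
Proof.
  intros Hpos x y [Hx | <-] Hxy Hy; pose proof (wr_root_nonneg k).
  - apply (lt_of_is_derive_pos mu dmu x y Hxy).
    + intros z Hz. apply is_derive_Reals, derivable_pt_lim_mu. lra.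
    + intros z Hz. apply Hpos. lra.
  - rewrite mu_wr_root. apply (mu_pos_between k). lra.
Qed.

Lemma mu_decreasing_from :
  (forall x, m < x < 2 * wr_root (S k) -> dmu x < 0) ->
  forall x y, m <= x -> x < y -> y <= 2 * wr_root (S k) -> mu y < mu x.
Proof.
  intros Hneg x y Hx Hxy [Hy | ->]; pose proof (wr_root_nonneg k).
  - enough (- mu x < - mu y) by lra.
    apply (lt_of_is_derive_pos (fun z => - mu z) (fun z => - dmu z) x y Hxy).
    + intros z Hz. apply (is_derive_opp mu), is_derive_Reals, derivable_pt_lim_mu. lra.
    + intros z Hz. pose proof (Hneg z ltac:(lra)). lra.
  - rewrite mu_wr_root. apply (mu_pos_between k). lra.
Qed.

End Monotonicity.

Theorem mainTheorem6 :
  (forall x, 0 < x -> mu_den x <> 0) /\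
  (forall x, 0 <= x -> 0 <= mu x) /\
  exists s : nat -> R,
    s 0%nat = 0 /\
    (forall k, s k < s (S k)) /\
    (forall x, 0 <= x -> (mu x = 0 <-> exists k, x = s k)) /\
    forall k, exists m : R,
      s k < m < s (S k) /\
      derivable_pt_lim mu m 0 /\
      (forall x, s k < x < s (S k) -> derivable_pt_lim mu x 0 -> x = m) /\
      (forall x, s k < x < s (S k) -> exists l, derivable_pt_lim mu x l) /\
      (forall x y, s k <= x -> x < y -> y <= m -> mu x < mu y) /\
      (forall x y, m <= x -> x < y -> y <= s (S k) -> mu y < mu x).
Proof.
  split; [intros x Hx; pose proof (mu_den_pos x Hx); lra |].
  split; [exact mu_nonneg |].
  exists (fun k => 2 * wr_root k). cbv beta.
  split; [simpl; ring |].
  split; [intros k; pose proof (wr_root_lt_succ k); lra |].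
  split; [intros x Hx; split; [now apply mu_eq0 | intros [k ->]; apply mu_wr_root] |].
  intros k. pose proof (wr_root_nonneg k).
  destruct (dmu_sign k) as [m (Hm & Hm0 & Hpos & Hneg)].
  exists m. split; [exact Hm |].
  split; [rewrite <- Hm0; apply derivable_pt_lim_mu; lra |].
  split.
  - intros x Hx Hd.
    assert (Hx0 : dmu x = 0)
      by (apply (uniqueness_limite mu x); [apply derivable_pt_lim_mu; lra | exact Hd]).
    destruct (Rtotal_order x m) as [Hlt | [Heq | Hgt]]; [| exact Heq |].
    + pose proof (Hpos x ltac:(lra)). lra.
    + pose proof (Hneg x ltac:(lra)). lra.
  - split; [intros x Hx; exists (dmu x); apply derivable_pt_lim_mu; lra |].
    split; [exact (mu_increasing_to k m Hm Hpos) | exact (mu_decreasing_from k m Hm Hneg)].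
Qed.
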